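(* Let $\mathcal F\subseteq 2^{[n]}$ be a simply rooted family of sets such that $\emptyset\in\mathcal F$, and let $A\in\mathcal F$ be non-empty. For $k\ge 0$ let $\mathcal C_k(\mathcal F,A)=\{[C,A]: C\subseteq A,\ [C,A]\subseteq\mathcal F,\ |A\setminus C|=k\}$. Then $$\sum_{k=0}^{|A|}(-1)^k|\mathcal C_k(\mathcal F,A)|=0.$$
   Context: $[n]=\{1,\dots,n\}$, $2^{[n]}$ its power set, $[C,D]=\{E\in 2^{[n]}: C\subseteq E\subseteq D\}$, $[i,A]=[\{i\},A]$. A family $\mathcal F\subseteq 2^{[n]}$ is simply rooted if for every non-empty $A\in\mathcal F$ there is $i\in A$ with $[i,A]\subseteq\mathcal F$. *)

From mathcomp Require Import all_boot all_order all_algebra.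
Set Implicit Arguments. Unset Strict Implicit. Unset Printing Implicit Defensive.

Definition setint (n : nat) (C D : {set 'I_n}) : {set {set 'I_n}} :=
  [set E : {set 'I_n} | (C \subset E) && (E \subset D)].

Definition simply_rooted (n : nat) (F : {set {set 'I_n}}) : Prop :=
  forall A, A \in F -> A != set0 ->
    exists2 i, i \in A & setint [set i] A \subset F.

Definition Ck (n : nat) (F : {set {set 'I_n}}) (A : {set 'I_n}) (k : nat)
  : {set {set {set 'I_n}}} :=
  [set setint C A | C in [set C : {set 'I_n} |
     [&& C \subset A, setint C A \subset F & #|A :\: C| == k]]].

(* Since C ↦ [C, A] is injective on subsets of A, the sum is S(A), where
   S(D) = [signed_intervals F D] is the alternating sum of (-1)^|D \ C| over the C ⊆ D
   with [C, D] ⊆ F.  In fact S(D) = [D = ∅] for every D.  If D ∉ F the sum is empty.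
   If D ∈ F has root i, the C containing i are exactly the interval [{i}, D], whose
   alternating sum is [D = {i}] by a sign-reversing toggle, while the C avoiding i are
   those with [C, D \ {i}] ⊆ F, contributing -S(D \ {i}) = -[D = {i}] by induction. *)

From mathcomp Require Import all_boot all_order all_algebra.
Set Implicit Arguments. Unset Strict Implicit. Unset Printing Implicit Defensive.
Import GRing.Theory Num.Theory.
Local Open Scope ring_scope.

Lemma sum_sign_reversing_involution (R : numDomainType) (T : finType)
    (P : pred T) (g : T -> T) (w : T -> R) :
  involutive g -> (forall x, P (g x) = P x) -> (forall x, P x -> w (g x) = - w x) ->
  \sum_(x | P x) w x = 0.
Proof.
move=> gK Pg wg; set s := \sum_(x | P x) w x.
have s_opp : s = - s.
  rewrite {1}/s (reindex_inj (inv_inj gK)) /= -sumrN.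
  by apply: eq_big => [x | x]; rewrite Pg // => /wg.
by apply/eqP; rewrite -eqNr -s_opp.
Qed.

Lemma sum_card_fibres (R : nmodType) (T : finType) (P : pred T) (f : T -> nat)
    (w : nat -> R) m :
  (forall x, P x -> f x < m)%N ->
  \sum_(0 <= k < m) w k *+ #|[set x | P x & f x == k]| = \sum_(x | P x) w (f x).
Proof.
move=> f_lt; under eq_bigr => k _ do rewrite -sumr_const big_mkcond.
rewrite exchange_big [RHS]big_mkcond; apply: eq_bigr => x _; rewrite -big_mkcond /=.
have [Px | nPx] := boolP (P x).
  rewrite (eq_bigl (fun k => k == f x)) => [|k]; last by rewrite inE Px eq_sym.
  by rewrite big_nat1_eq f_lt.
by rewrite big_pred0 // => k; rewrite inE (negbTE nPx).
Qed.

Section Toggle.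
Variable T : finType.
Implicit Types (j : T) (C D X : {set T}).

Definition toggle j C := if j \in C then C :\ j else j |: C.

Lemma toggleK j : involutive (toggle j).
Proof.
move=> C; rewrite /toggle; have [jC | njC] := boolP (j \in C).
  by rewrite setD11 setD1K.
by rewrite setU11 setU1K.
Qed.

Lemma mem_toggle j C x : (x \in toggle j C) = (x == j) (+) (x \in C).
Proof.
by rewrite /toggle; case: ifP => jC; rewrite !inE; case: eqP => // ->; rewrite jC.
Qed.

Lemma setD1_toggle j C : toggle j C :\ j = C :\ j.
Proof. by apply/setP => x; rewrite !inE mem_toggle; case: eqP. Qed.

Lemma setU1_toggle j C : j |: toggle j C = j |: C.
Proof. by apply/setP => x; rewrite !inE mem_toggle; case: eqP. Qed.

Lemma setD_toggle j D C : j \in D -> D :\: toggle j C = toggle j (D :\: C).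
Proof.
move=> jD; apply/setP => x; rewrite !(inE, mem_toggle).
by case: eqP => [->|] //=; rewrite jD !andbT.
Qed.

Lemma sign_card_toggle (R : pzRingType) j C :
  (-1) ^+ #|toggle j C| = - (-1) ^+ #|C| :> R.
Proof.
rewrite /toggle; case: ifP => jC.
  by rewrite [in RHS](cardsD1 j C) jC exprS mulN1r opprK.
by rewrite cardsU1 jC exprS mulN1r.
Qed.

End Toggle.

Section Intervals.
Variable n : nat.
Implicit Types (j : 'I_n) (C D E X : {set 'I_n}).

Lemma setintS X X' D D' :
  X' \subset X -> D \subset D' -> setint X D \subset setint X' D'.
Proof.
move=> X'X DD'; apply/subsetP => E; rewrite !inE => /andP[XE ED].
by rewrite (subset_trans X'X XE) (subset_trans ED DD').
Qed.

Lemma setint_id C : setint C C = [set C].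
Proof. by apply/setP => E; rewrite !inE eq_sym eqEsubset. Qed.

Lemma setint_inj D :
  {in [pred C : {set 'I_n} | C \subset D] &, injective (fun C => setint C D)}.
Proof.
move=> C C'; rewrite !inE => CD C'D eqCC'.
have: C \in setint C' D by rewrite -eqCC' inE subxx CD.
have: C' \in setint C D by rewrite eqCC' inE subxx C'D.
by rewrite !inE => /andP[CC' _] /andP[C'C _]; apply/eqP; rewrite eqEsubset CC'.
Qed.

Lemma toggle_in_setint j X D C : j \in D :\: X ->
  (toggle j C \in setint X D) = (C \in setint X D).
Proof.
case/setDP=> jD jX; rewrite !inE.
have subX E : (X \subset E) = (X \subset E :\ j) by rewrite subsetD1 jX andbT.
have subD E : (E \subset D) = (j |: E \subset D) by rewrite subUset sub1set jD.
by rewrite subX setD1_toggle -subX subD setU1_toggle -subD.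
Qed.

Lemma sum_setint_sign X D : X \subset D ->
  \sum_(C in setint X D) (-1) ^+ #|D :\: C| = (D == X)%:R :> int.
Proof.
move=> XD; have [->|neDX] := eqVneq D X.
  rewrite (big_pred1 X) ?setDv ?cards0 // => C.
  by rewrite !inE -eqEsubset eq_sym.
have [j jDX] : exists j, j \in D :\: X.
  by apply/set0Pn; rewrite setD_eq0; apply: contra neDX => DX; rewrite eqEsubset DX.
apply: (sum_sign_reversing_involution (toggleK j)) => [C | C _].
  exact: toggle_in_setint.
by rewrite setD_toggle ?sign_card_toggle //; case/setDP: jDX.
Qed.

End Intervals.

Section SignedIntervals.
Variables (n : nat) (F : {set {set 'I_n}}).
Implicit Types (C D : {set 'I_n}).

Definition signed_intervals D : int :=
  \sum_(C : {set 'I_n} | (C \subset D) && (setint C D \subset F)) (-1) ^+ #|D :\: C|.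

Lemma setint_sub_rootD1 i C D : setint [set i] D \subset F ->
  (setint C D \subset F) = (setint C (D :\ i) \subset F).
Proof.
move=> rootF; apply/idP/idP => [|CDiF]; first by apply/subset_trans/setintS/subD1set.
apply/subsetP => E; rewrite inE => /andP[CE ED]; have [iE | niE] := boolP (i \in E).
  by apply: (subsetP rootF); rewrite inE sub1set iE ED.
by apply: (subsetP CDiF); rewrite inE CE subsetD1 ED niE.
Qed.

Lemma signed_intervals_root i D : i \in D -> setint [set i] D \subset F ->
  signed_intervals D = (D == [set i])%:R - signed_intervals (D :\ i).
Proof.
move=> iD rootF; rewrite /signed_intervals (bigID (fun C => i \in C)) /=; congr (_ + _).
  rewrite -sum_setint_sign ?sub1set //; apply: eq_bigl => C.
  rewrite inE sub1set andbC; have [iC /= | //] := boolP (i \in C).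
  have [CD /= | //] := boolP (C \subset D).
  by apply: subset_trans rootF; apply: setintS; rewrite ?sub1set.
rewrite -sumrN; apply: eq_big => C.
  by rewrite subsetD1 -setint_sub_rootD1 // -!andbA (andbC (i \notin C)).
case/andP=> /andP[CD _] iC.
rewrite setDDl setUC -setDDl [in LHS](cardsD1 i) !inE iD iC /=.
by rewrite add1n exprS mulN1r.
Qed.

Lemma card_Ck D k :
  #|Ck F D k| =
  #|[set C : {set 'I_n} | (C \subset D) && (setint C D \subset F) & #|D :\: C| == k]|.
Proof.
rewrite card_in_imset => [|C C']; first by apply: eq_card => C; rewrite !inE andbA.
by rewrite !inE => /andP[CD _] /andP[C'D _]; apply: setint_inj.
Qed.

Hypotheses (F_simply_rooted : simply_rooted F) (F0 : set0 \in F).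

Lemma signed_intervals_eq D : signed_intervals D = (D == set0)%:R.
Proof.
move Dm: #|D| => m; elim: m D Dm => [|m IH] D Dm.
  rewrite (cards0_eq Dm) eqxx /signed_intervals (big_pred1 set0) ?setD0 ?cards0 // => C /=.
  rewrite subset0; have [-> | //] := eqVneq C set0.
  by rewrite setint_id sub1set F0.
have D_neq0 : D != set0 by rewrite -card_gt0 Dm.
rewrite (negbTE D_neq0); have [DF | DnF] := boolP (D \in F); last first.
  rewrite /signed_intervals big_pred0 // => C; apply/andP => -[CD /subsetP CDF].
  by move: DnF; rewrite CDF // inE CD subxx.
have [i iD rootF] := F_simply_rooted DF D_neq0.
rewrite (signed_intervals_root iD rootF) IH; last first.
  by move: Dm; rewrite (cardsD1 i) iD add1n => -[].
by rewrite setD_eq0 eqEsubset sub1set iD andbT subrr.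
Qed.

End SignedIntervals.

Theorem lemma1 (n : nat) (F : {set {set 'I_n}}) (A : {set 'I_n}) :
  simply_rooted F -> set0 \in F -> A \in F -> A != set0 ->
  \sum_(0 <= k < #|A|.+1) (-1) ^+ k * (#|Ck F A k|)%:R = (0 : int).
Proof.
move=> F_simply_rooted F0 _ A_neq0.
under eq_bigr => k _ do rewrite card_Ck mulr_natr.
rewrite sum_card_fibres => [|C _]; last by rewrite ltnS subset_leq_card ?subsetDl.
by rewrite -/(signed_intervals F A) signed_intervals_eq // (negbTE A_neq0).
Qed.
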